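(* For every $\mathbb{R}$-tree $T$ there exist a simplicial tree $\Gamma$ and a $(1,2)$-quasi-isometry $\Gamma\to T$.
   Context: An $\mathbb{R}$-tree is a metric space in which any two points are joined by a unique topological arc, which is a geodesic. A simplicial tree is a 1-dimensional simplicial complex which is an $\mathbb{R}$-tree for the path metric with edges isometric to $[0,1]$. A map $f:(X,d_X)\to(Y,d_Y)$ is a $(1,C)$-quasi-isometry if $d_X(a,b)-C\leqslant d_Y(f(a),f(b))\leqslant d_X(a,b)+C$ for all $a,b$ and every $y\in Y$ is within distance $C$ of $f(X)$. *)

From Stdlib Require Import Reals Lra List Classical ClassicalEpsilon.
Open Scope R_scope.

Definition is_metric {X : Type} (d : X -> X -> R) : Prop :=
  (forall x y, 0 <= d x y) /\
  (forall x y, d x y = 0 <-> x = y) /\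
  (forall x y, d x y = d y x) /\
  (forall x y z, d x z <= d x y + d y z).

(* A topological arc from x to y: a continuous injective map [0,1] -> X
   (a continuous injection from a compact space into a metric space is an
   embedding, so its image is a topological arc). *)
Definition is_arc {X : Type} (d : X -> X -> R) (g : R -> X) (x y : X) : Prop :=
  g 0 = x /\ g 1 = y /\
  (forall s, 0 <= s <= 1 -> forall eps, 0 < eps -> exists delta, 0 < delta /\
     forall s', 0 <= s' <= 1 -> Rabs (s - s') < delta -> d (g s) (g s') < eps) /\
  (forall s t, 0 <= s <= 1 -> 0 <= t <= 1 -> g s = g t -> s = t).

Definition is_geodesic {X : Type} (d : X -> X -> R) (g : R -> X) (x y : X) : Prop :=
  g 0 = x /\ g (d x y) = y /\
  (forall s t, 0 <= s <= d x y -> 0 <= t <= d x y -> d (g s) (g t) = Rabs (s - t)).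

(* R-tree: any two points are joined by a unique topological arc, and this
   arc is (the image of) a geodesic: there is a geodesic from x to y and every
   arc from x to y has the same image as it. *)
Definition R_tree {X : Type} (d : X -> X -> R) : Prop :=
  is_metric d /\
  forall x y, exists g, is_geodesic d g x y /\
    forall a, is_arc d a x y ->
      forall z, (exists s, 0 <= s <= 1 /\ a s = z) <->
                (exists t, 0 <= t <= d x y /\ g t = z).

(* A graph with vertex type V and edge type E; each edge e is an (arbitrarily
   oriented) segment from [src e] to [tgt e]. *)
Section Graph.
Context {V E : Type} (src tgt : E -> V).

Definition adj (u w : V) : Prop :=
  exists e, (src e = u /\ tgt e = w) \/ (src e = w /\ tgt e = u).

Inductive walk : V -> V -> nat -> Prop :=
| walk_nil u : walk u u 0
| walk_cons u w v n : adj u w -> walk w v n -> walk u v (S n).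

(* combinatorial distance (least length of a walk; meaningful when connected) *)
Definition gdist (u v : V) : nat :=
  epsilon (inhabits 0%nat)
    (fun n => walk u v n /\ forall m, walk u v m -> (n <= m)%nat).

(* Points of the geometric realization: vertices, or interior points of an
   edge e at parameter t in (0,1) (distance t from src e, 1 - t from tgt e).
   Each edge is thus a copy of [0,1]. *)
Inductive rpoint : Type :=
| RV : V -> rpoint
| RE : E -> {t : R | 0 < t < 1} -> rpoint.

Definition ends (p : rpoint) : list (V * R) :=
  match p with
  | RV v => (v, 0) :: nil
  | RE e t => (src e, proj1_sig t) :: (tgt e, 1 - proj1_sig t) :: nil
  end.

Definition minl (l : list R) : R :=
  match l with nil => 0 | c :: cs => fold_right Rmin c cs end.

(* length of shortest path leaving through vertices *)
Definition via (p q : rpoint) : R :=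
  minl (flat_map (fun a => map (fun b => snd a + INR (gdist (fst a) (fst b)) + snd b)
                                (ends q)) (ends p)).

Definition pdist (p q : rpoint) : R :=
  match p, q with
  | RE e t, RE e' s =>
      if excluded_middle_informative (e = e')
      then Rabs (proj1_sig t - proj1_sig s) else via p q
  | _, _ => via p q
  end.

(* Simplicial tree: a 1-dimensional simplicial complex (no loops, no multiple
   edges), connected (so the path metric is defined), which is an R-tree for
   its path metric. *)
Definition simplicial_tree : Prop :=
  (forall e, src e <> tgt e) /\
  (forall e e', ((src e = src e' /\ tgt e = tgt e') \/
                 (src e = tgt e' /\ tgt e = src e')) -> e = e') /\
  (forall u v, exists n, walk u v n) /\
  R_tree pdist.

End Graph.

Arguments RV {V E}.
Arguments RE {V E}.

Definition quasi_isometry_1C {X Y : Type} (dX : X -> X -> R) (dY : Y -> Y -> R)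
    (f : X -> Y) (C : R) : Prop :=
  (forall a b, dX a b - C <= dY (f a) (f b) /\ dY (f a) (f b) <= dX a b + C) /\
  (forall y, exists x, dY y (f x) <= C).

From Stdlib Require Import Reals Lra Lia List Classical ClassicalEpsilon ZArith.
Open Scope R_scope.

(* Fix a base point [o] of the R-tree and write [ht x = d o x].  Since the geodesics from
   [o] to [u] and to [v] share exactly an initial segment of length [(u | v)_o], the metric
   is [d u v = ht u + ht v - 2 (u | v)_o].  The graph has the points of integer height as
   vertices, [x] being joined to [y] when [y] is one unit higher and lies beyond [x] on a
   geodesic from [o]; the metric of its realization has the same shape, with confluence
   level [floor (u | v)_o] truncated by the heights.  A metric of this shape satisfies the
   four-point condition, and a 0-hyperbolic geodesic space is an R-tree, so the graph is a
   simplicial tree.  Mapping each point to the point of [T] at the same height below the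
   upper end of its cell moves confluence levels by less than 1, hence distances by at
   most 2, and every point of [T] is within 1 of a vertex. *)

Ltac Rmin_lra :=
  unfold Rmin in *;
  first
  [ lra
  | match goal with
    | |- context [Rle_dec ?a ?b] => destruct (Rle_dec a b); Rmin_lra
    | H : context [Rle_dec ?a ?b] |- _ => destruct (Rle_dec a b); Rmin_lra
    end ].

Lemma INR_min m n : INR (Nat.min m n) = Rmin (INR m) (INR n).
Proof.
  destruct (Nat.le_ge_cases m n) as [h | h].
  - rewrite Nat.min_l by exact h. apply le_INR in h. Rmin_lra.
  - rewrite Nat.min_r by exact h. apply le_INR in h. Rmin_lra.
Qed.

Definition nfloor (r : R) : nat := Z.to_nat (Int_part r).

Lemma nfloor_spec r : 0 <= r -> INR (nfloor r) <= r < INR (nfloor r) + 1.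
Proof.
  intros h. destruct (base_Int_part r) as [b1 b2].
  assert (0 <= Int_part r)%Z by (assert (-1 < Int_part r)%Z by (apply lt_IZR; lra); lia).
  unfold nfloor. rewrite INR_IZR_INZ, Z2Nat.id by assumption. lra.
Qed.

Lemma le_nfloor r n : 0 <= r -> (INR n <= r <-> (n <= nfloor r)%nat).
Proof.
  intros h. pose proof (nfloor_spec r h). split; intro H1.
  - assert (INR n < INR (S (nfloor r))) by (rewrite S_INR; lra). apply INR_lt in H0. lia.
  - apply le_INR in H1. lra.
Qed.

Lemma nfloor_INR n : nfloor (INR n) = n.
Proof.
  pose proof (pos_INR n) as h. apply Nat.le_antisymm.
  - apply INR_le. apply nfloor_spec, h.
  - apply le_nfloor; lra.
Qed.

Lemma Rabs_eq0 r : Rabs r = 0 -> r = 0.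
Proof. unfold Rabs; destruct Rcase_abs; lra. Qed.

Lemma interval_locally_constant_ind (Q : R -> Prop) s1 s2 : s1 <= s2 ->
  (forall s, s1 <= s <= s2 -> exists delta, 0 < delta /\
     forall s', s1 <= s' <= s2 -> Rabs (s - s') < delta -> (Q s <-> Q s')) ->
  Q s1 -> Q s2.
Proof.
  intros H12 Hloc H1.
  set (G := fun u => s1 <= u <= s2 /\ forall v, s1 <= v <= u -> Q v).
  assert (G1 : G s1).
  { split; [lra|]. intros v Hv. replace v with s1 by lra. exact H1. }
  assert (HB : bound G) by (exists s2; intros u [Hu _]; lra).
  destruct (completeness G HB (ex_intro _ s1 G1)) as [sg [Hub Hlub]].
  assert (Hs1 : s1 <= sg) by (apply Hub, G1).
  assert (Hs2 : sg <= s2) by (apply Hlub; intros u [Hu _]; lra).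
  destruct (Hloc sg (conj Hs1 Hs2)) as [dl [Hdl Hn]].
  assert (Hu : exists u, G u /\ sg - dl < u).
  { apply NNPP; intro Hno.
    assert (sg <= sg - dl); [|lra].
    apply Hlub. intros u Hu. destruct (Rle_dec u (sg - dl)) as [h|h]; [exact h|].
    exfalso; apply Hno; exists u; split; [exact Hu|lra]. }
  destruct Hu as [u [[Hu1 Hu2] Hu3]].
  assert (Hus : u <= sg) by (apply Hub; split; assumption).
  assert (HQs : Q sg).
  { apply (Hn u ltac:(lra) ltac:(rewrite Rabs_right; lra)). apply Hu2; lra. }
  assert (Hw : G (Rmin s2 (sg + dl/2))).
  { split; [Rmin_lra|].
    intros v Hv. destruct (Rle_dec v u) as [h|h]; [apply Hu2; lra|].
    assert (v <= sg + dl / 2 /\ v <= s2) as [Hv2 Hv3] by Rmin_lra.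
    apply (Hn v ltac:(lra) ltac:(unfold Rabs; destruct Rcase_abs; lra)), HQs. }
  apply Hub in Hw.
  replace s2 with sg by Rmin_lra. exact HQs.
Qed.

(** * Metric spaces, Gromov products and arcs *)

Definition gprod {X : Type} (d : X -> X -> R) (w x y : X) : R := (d w x + d w y - d x y) / 2.

Definition isometric_on {X : Type} (d : X -> X -> R) (p : R -> X) (L : R) : Prop :=
  forall s s', 0 <= s <= L -> 0 <= s' <= L -> d (p s) (p s') = Rabs (s - s').

Definition concat {X : Type} (p1 p2 : R -> X) (L1 r : R) : X :=
  if Rle_dec r L1 then p1 r else p2 (r - L1).

Section Metric.
Context {X : Type} {d : X -> X -> R} (Hd : is_metric d).

Lemma metric_ge0 x y : 0 <= d x y.
Proof. apply Hd. Qed.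

Lemma metric_eq0 x y : d x y = 0 -> x = y.
Proof. apply Hd. Qed.

Lemma metric_refl x : d x x = 0.
Proof. apply Hd; reflexivity. Qed.

Lemma metric_sym x y : d x y = d y x.
Proof. apply Hd. Qed.

Lemma metric_triangle x y z : d x z <= d x y + d y z.
Proof. apply Hd. Qed.

Lemma gprod_sym w x y : gprod d w x y = gprod d w y x.
Proof. unfold gprod; rewrite (metric_sym x y); lra. Qed.

Lemma gprod_ge0 w x y : 0 <= gprod d w x y.
Proof. unfold gprod. pose proof (metric_triangle x w y). rewrite (metric_sym x w) in *. lra. Qed.

Lemma gprod_le w x y : gprod d w x y <= d w x.
Proof. unfold gprod. pose proof (metric_triangle w x y). lra. Qed.

Lemma isometric_on_inj p L s s' : isometric_on d p L -> 0 <= s <= L -> 0 <= s' <= L ->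
  p s = p s' -> s = s'.
Proof.
  intros Hp hs hs' E.
  assert (Rabs (s - s') = 0) by (rewrite <- Hp, E by assumption; apply metric_refl).
  apply Rabs_eq0 in H. lra.
Qed.

Lemma arc_of_lipschitz_injective (c : R -> X) L u v :
  0 < L -> c 0 = u -> c L = v ->
  (forall r r', 0 <= r <= L -> 0 <= r' <= L -> d (c r) (c r') <= Rabs (r - r')) ->
  (forall r r', 0 <= r <= L -> 0 <= r' <= L -> c r = c r' -> r = r') ->
  is_arc d (fun s => c (s * L)) u v.
Proof.
  intros HL Hu Hv Hlip Hinj.
  assert (Hs : forall s, 0 <= s <= 1 -> 0 <= s * L <= L) by (intros s hs; split; nra).
  split; [|split; [|split]].
  - rewrite Rmult_0_l; exact Hu.
  - rewrite Rmult_1_l; exact Hv.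
  - intros s hs eps heps. exists (eps / L). split; [apply Rdiv_lt_0_compat; lra|].
    intros s' hs' hd. eapply Rle_lt_trans; [apply Hlip; auto|].
    rewrite <- Rmult_minus_distr_r, Rabs_mult, (Rabs_right L) by lra.
    apply Rmult_lt_reg_r with (/ L); [apply Rinv_0_lt_compat; lra|].
    rewrite Rmult_assoc, Rinv_r, Rmult_1_r by lra. exact hd.
  - intros s t hs ht E. apply Rmult_eq_reg_r with L; [|lra]. apply Hinj; auto.
Qed.

Section Concat.
Variables (p1 p2 : R -> X) (L1 L2 : R).
Hypotheses (L1_ge0 : 0 <= L1) (L2_ge0 : 0 <= L2) (junction : p1 L1 = p2 0).
Hypotheses (p1_iso : isometric_on d p1 L1) (p2_iso : isometric_on d p2 L2).

Lemma concat_lipschitz_le r r' : 0 <= r -> r <= r' -> r' <= L1 + L2 ->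
  d (concat p1 p2 L1 r) (concat p1 p2 L1 r') <= Rabs (r - r').
Proof.
  intros hr hrr hr'. rewrite Rabs_left1 by lra. unfold concat.
  destruct (Rle_dec r L1), (Rle_dec r' L1).
  - rewrite p1_iso by lra. rewrite Rabs_left1; lra.
  - pose proof (metric_triangle (p1 r) (p1 L1) (p2 (r' - L1))) as D.
    rewrite p1_iso, junction, p2_iso, !Rabs_left1 in D by lra. lra.
  - lra.
  - rewrite p2_iso by lra. rewrite Rabs_left1; lra.
Qed.

Lemma concat_lipschitz r r' : 0 <= r <= L1 + L2 -> 0 <= r' <= L1 + L2 ->
  d (concat p1 p2 L1 r) (concat p1 p2 L1 r') <= Rabs (r - r').
Proof.
  intros hr hr'. destruct (Rle_dec r r'); [apply concat_lipschitz_le; lra|].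
  rewrite metric_sym, Rabs_minus_sym. apply concat_lipschitz_le; lra.
Qed.

Hypothesis meet_at_junction :
  forall s t, 0 <= s <= L1 -> 0 <= t <= L2 -> p1 s = p2 t -> s = L1 /\ t = 0.

Lemma concat_injective r r' : 0 <= r <= L1 + L2 -> 0 <= r' <= L1 + L2 ->
  concat p1 p2 L1 r = concat p1 p2 L1 r' -> r = r'.
Proof.
  intros hr hr' E. unfold concat in E.
  destruct (Rle_dec r L1), (Rle_dec r' L1).
  - apply (isometric_on_inj p1 L1); auto; lra.
  - destruct (meet_at_junction r (r' - L1) ltac:(lra) ltac:(lra) E). lra.
  - destruct (meet_at_junction r' (r - L1) ltac:(lra) ltac:(lra) (eq_sym E)). lra.
  - assert (r - L1 = r' - L1) by (apply (isometric_on_inj p2 L2); auto; lra). lra.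
Qed.

Lemma concat_arc : 0 < L1 + L2 ->
  is_arc d (fun s => concat p1 p2 L1 (s * (L1 + L2))) (p1 0) (p2 L2).
Proof.
  intros hL. apply arc_of_lipschitz_injective; auto using concat_lipschitz, concat_injective.
  - unfold concat. destruct Rle_dec; [reflexivity|lra].
  - unfold concat. destruct Rle_dec.
    + replace L2 with 0 by lra. rewrite <- junction. f_equal. lra.
    + f_equal. lra.
Qed.

End Concat.
End Metric.

(** * Zero-hyperbolic geodesic spaces are R-trees *)

Section ZeroHyperbolic.
Variables (X : Type) (d : X -> X -> R).
Hypothesis d_metric : is_metric d.
Hypothesis four_point : forall w x y z,
  Rmin (gprod d w x z) (gprod d w z y) <= gprod d w x y.
Hypothesis geodesic_exists : forall x y, exists g, is_geodesic d g x y.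

Let d_ge0 := metric_ge0 d_metric.
Let d_sym := metric_sym d_metric.

Lemma gprod_pos_trans z x y w :
  0 < gprod d z x y -> 0 < gprod d z y w -> 0 < gprod d z x w.
Proof. intros H1 H2. pose proof (four_point z x w y). Rmin_lra. Qed.

(* If the arc missed [z], [0 < (a s | a s1)_z] would be locally constant in [s],
   yet it holds at [s1] and fails at [s2]. *)
Lemma arc_hits_gprod0 (a : R -> X)
  (a_cont : forall s, 0 <= s <= 1 -> forall eps, 0 < eps -> exists delta, 0 < delta /\
     forall s', 0 <= s' <= 1 -> Rabs (s - s') < delta -> d (a s) (a s') < eps)
  s1 s2 z : 0 <= s1 -> s1 <= s2 -> s2 <= 1 -> gprod d z (a s1) (a s2) = 0 ->
  exists s, s1 <= s <= s2 /\ a s = z.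
Proof.
  intros h1 h2 h3 Hg. apply NNPP; intro Hno.
  assert (Hpos : forall s, s1 <= s <= s2 -> 0 < d z (a s)).
  { intros s Hs. destruct (Rle_lt_or_eq_dec 0 (d z (a s)) (d_ge0 _ _)) as [h|h]; [exact h|].
    exfalso; apply Hno; exists s; split; [exact Hs|].
    symmetry; apply (metric_eq0 d_metric); auto. }
  assert (0 < gprod d z (a s2) (a s1)); [|rewrite (gprod_sym d_metric) in H; lra].
  apply (interval_locally_constant_ind (fun s => 0 < gprod d z (a s) (a s1)) s1 s2 h2).
  - intros s Hs. destruct (a_cont s ltac:(lra) (d z (a s)) (Hpos s Hs)) as [dl [Hdl Hd]].
    exists dl; split; [exact Hdl|]. intros s' Hs' Hss'.
    assert (Hd' := Hd s' ltac:(lra) Hss').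
    assert (Hw : 0 < gprod d z (a s) (a s')).
    { unfold gprod. pose proof (d_ge0 z (a s')). lra. }
    split; intro Hq.
    + apply (gprod_pos_trans z (a s') (a s) (a s1)); [rewrite (gprod_sym d_metric)|]; auto.
    + apply (gprod_pos_trans z (a s) (a s') (a s1)); auto.
  - unfold gprod. rewrite (metric_refl d_metric). pose proof (Hpos s1 ltac:(lra)). lra.
Qed.

Lemma geodesic_gprod0 g x y t : is_geodesic d g x y -> 0 <= t <= d x y -> gprod d (g t) x y = 0.
Proof.
  intros [H0 [H1 H2]] Ht. unfold gprod.
  pose proof (H2 0 t ltac:(pose proof (d_ge0 x y); lra) Ht) as A.
  pose proof (H2 t (d x y) Ht ltac:(pose proof (d_ge0 x y); lra)) as B.
  rewrite H0 in A. rewrite H1 in B. rewrite (d_sym (g t) x), A, B.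
  rewrite !Rabs_left1 by lra. lra.
Qed.

Lemma gprod0_on_geodesic g x y z : is_geodesic d g x y -> gprod d z x y = 0 ->
  exists t, 0 <= t <= d x y /\ g t = z.
Proof.
  intros [H0 [H1 H2]] Hz. unfold gprod in Hz. rewrite (d_sym z x) in Hz.
  assert (Ht : 0 <= d x z <= d x y).
  { pose proof (d_ge0 x z); pose proof (d_ge0 z y). lra. }
  exists (d x z); split; [exact Ht|].
  pose proof (H2 0 (d x z) ltac:(pose proof (d_ge0 x y); lra) Ht) as A.
  pose proof (H2 (d x z) (d x y) Ht ltac:(pose proof (d_ge0 x y); lra)) as B.
  rewrite H0 in A. rewrite H1, (d_sym _ y) in B.
  rewrite Rabs_left1 in A, B by lra.
  pose proof (four_point x z (g (d x z)) y) as C. unfold gprod in C.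
  assert (d z (g (d x z)) <= 0) by Rmin_lra.
  symmetry; apply (metric_eq0 d_metric). pose proof (d_ge0 z (g (d x z))). lra.
Qed.

(* Otherwise a point [z'] near [z] towards [x] would be met by the arc both before
   and after [z], contradicting injectivity. *)
Lemma arc_gprod0 a x y s : is_arc d a x y -> 0 <= s <= 1 -> gprod d (a s) x y = 0.
Proof.
  intros [Ha0 [Ha1 [Hc Hinj]]] Hs. set (z := a s).
  destruct (Rle_lt_or_eq_dec 0 (gprod d z x y) (gprod_ge0 d_metric z x y)) as [Hr|Hr];
    [exfalso|auto].
  set (r := gprod d z x y) in *.
  destruct (geodesic_exists z x) as [h [Hh0 [Hh1 Hh2]]].
  assert (Hrz : r <= d z x) by apply (gprod_le d_metric).
  set (z' := h (r/2)).
  assert (Hzz' : d z z' = r/2).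
  { unfold z'. rewrite <- Hh0 at 1. rewrite Hh2 by lra. rewrite Rabs_left1; lra. }
  assert (Hz'x : d z' x = d z x - r/2).
  { unfold z'. rewrite <- Hh1 at 1. rewrite Hh2 by lra. rewrite Rabs_left1; lra. }
  assert (G1 : gprod d z' z x = 0) by (unfold gprod; rewrite (d_sym z' z); lra).
  assert (G2 : gprod d z' z y = 0).
  { pose proof (four_point z z' y x) as C. pose proof (metric_triangle d_metric z z' y).
    unfold r, gprod in *. rewrite (d_sym z' z). Rmin_lra. }
  destruct (arc_hits_gprod0 a Hc 0 s z' ltac:(lra) ltac:(lra) ltac:(lra)) as [s1 [Hs1 E1]].
  { rewrite Ha0. fold z. rewrite (gprod_sym d_metric). exact G1. }
  destruct (arc_hits_gprod0 a Hc s 1 z' ltac:(lra) ltac:(lra) ltac:(lra)) as [s2 [Hs2 E2]].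
  { rewrite Ha1. exact G2. }
  assert (Hzz : z' <> z) by (intro He; rewrite He, (metric_refl d_metric) in Hzz'; lra).
  assert (s1 <> s) by (intro E; subst s1; exact (Hzz (eq_sym E1))).
  assert (s2 <> s) by (intro E; subst s2; exact (Hzz (eq_sym E2))).
  assert (s1 = s2) by (apply Hinj; [lra|lra|congruence]).
  lra.
Qed.

Theorem zero_hyperbolic_R_tree : R_tree d.
Proof.
  split; [exact d_metric|].
  intros x y. destruct (geodesic_exists x y) as [g Hg]. exists g; split; [exact Hg|].
  intros a Ha z. split.
  - intros [s [Hs <-]]. apply gprod0_on_geodesic; auto. apply arc_gprod0; auto.
  - intros [t [Ht <-]]. destruct Ha as [Ha0 [Ha1 [Hc _]]].
    destruct (arc_hits_gprod0 a Hc 0 1 (g t) ltac:(lra) ltac:(lra) ltac:(lra)) as [s Hs].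
    { rewrite Ha0, Ha1. apply geodesic_gprod0; auto. }
    exists s; exact Hs.
Qed.

End ZeroHyperbolic.

(** * Rooted trees given by heights and confluence levels *)

Definition ultra_triangle (a b c : R) : Prop :=
  Rmin a b <= c /\ Rmin b c <= a /\ Rmin c a <= b.

Lemma four_point_of_ultra_triangles wx wy wz xy xz yz :
  ultra_triangle wx wy xy -> ultra_triangle wx wz xz ->
  ultra_triangle wy wz yz -> ultra_triangle xy xz yz ->
  Rmin (xz - wx - wz) (yz - wz - wy) <= xy - wx - wy.
Proof. unfold ultra_triangle; intros [? [? ?]] [? [? ?]] [? [? ?]] [? [? ?]]. Rmin_lra. Qed.

(* [l p] plays the distance from a root and [m p q] the height at which the
   geodesics from the root to [p] and to [q] part. *)
Section Rooted.
Variables (X : Type) (d : X -> X -> R) (l : X -> R) (m : X -> X -> R).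
Hypothesis dist_levels : forall p q, d p q = l p + l q - 2 * m p q.
Hypothesis m_sym : forall p q, m p q = m q p.
Hypothesis m_le : forall p q, m p q <= l p.
Hypothesis m_diag : forall p, m p p = l p.
Hypothesis m_ge0 : forall p q, 0 <= m p q.
Hypothesis m_ultra : forall p q r, Rmin (m p q) (m q r) <= m p r.
Hypothesis m_sep : forall p q, m p q = l p -> l p = l q -> p = q.
Hypothesis ancestor_exists : forall p r, 0 <= r <= l p ->
  exists a, l a = r /\ forall q, m a q = Rmin r (m p q).

Lemma m_le_r p q : m p q <= l q.
Proof. rewrite m_sym; apply m_le. Qed.

Lemma rooted_metric : is_metric d.
Proof.
  split; [|split; [|split]]; intros p q; rewrite ?dist_levels.
  - pose proof (m_le p q); pose proof (m_le_r p q); lra.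
  - split; [|intros <-; rewrite m_diag; lra].
    intro E. pose proof (m_le p q); pose proof (m_le_r p q). apply m_sep; lra.
  - rewrite m_sym; lra.
  - intros r. rewrite !dist_levels.
    pose proof (m_ultra p q r); pose proof (m_le q r); pose proof (m_le_r p q). Rmin_lra.
Qed.

Lemma ultra_triangle_m p q r : ultra_triangle (m p q) (m p r) (m q r).
Proof.
  pose proof (m_ultra q p r); pose proof (m_ultra p r q); pose proof (m_ultra p q r).
  rewrite (m_sym q p), (m_sym r q) in *. unfold ultra_triangle. Rmin_lra.
Qed.

Lemma rooted_four_point w x y z :
  Rmin (gprod d w x z) (gprod d w z y) <= gprod d w x y.
Proof.
  unfold gprod. rewrite !dist_levels, (m_sym z y).
  pose proof (four_point_of_ultra_triangles _ _ _ _ _ _ (ultra_triangle_m w x y)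
    (ultra_triangle_m w x z) (ultra_triangle_m w y z) (ultra_triangle_m x y z)).
  Rmin_lra.
Qed.

Definition ancestor_map (u : X) (a : R -> X) : Prop :=
  forall r, 0 <= r <= l u -> l (a r) = r /\ forall q, m (a r) q = Rmin r (m u q).

Lemma ancestor_map_exists u : exists a, ancestor_map u a.
Proof.
  apply (choice (fun r a => 0 <= r <= l u -> l a = r /\ forall q, m a q = Rmin r (m u q))).
  intros r. destruct (classic (0 <= r <= l u)) as [h|h].
  - destruct (ancestor_exists u r h) as [a Ha]. exists a; intros _; exact Ha.
  - exists u; intro; contradiction.
Qed.

Lemma ancestor_map_at u a v r : ancestor_map u a -> 0 <= r <= l u -> r <= m u v -> l v = r ->
  a r = v.
Proof.
  intros Ha hr hv hl. destruct (Ha r hr) as [A B].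
  apply m_sep; [rewrite B, A; Rmin_lra|congruence].
Qed.

Lemma ancestor_map_isometry u a : ancestor_map u a -> isometric_on d (fun s => a (l u - s)) (l u).
Proof.
  intros Ha s s' hs hs'. destruct (Ha (l u - s)) as [A1 B1], (Ha (l u - s')) as [A2 B2]; try lra.
  rewrite dist_levels, A1, A2, B1, m_sym, B2, m_diag.
  unfold Rabs; destruct Rcase_abs; Rmin_lra.
Qed.

Lemma ancestor_maps_dist p q ap aq r1 r2 : ancestor_map p ap -> ancestor_map q aq ->
  m p q <= r1 <= l p -> m p q <= r2 <= l q -> d (ap r1) (aq r2) = r1 + r2 - 2 * m p q.
Proof.
  intros Hap Haq h1 h2. pose proof (m_ge0 p q).
  destruct (Hap r1) as [A1 B1], (Haq r2) as [A2 B2]; try lra.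
  rewrite dist_levels, A1, A2, B1, m_sym, B2, (m_sym q p). Rmin_lra.
Qed.

(* The geodesic from [p] to [q] descends from [p] to level [m p q], then climbs to [q]. *)
Lemma rooted_geodesic p q : exists g, is_geodesic d g p q.
Proof.
  pose proof (m_ge0 p q); pose proof (m_le p q); pose proof (m_le_r p q).
  destruct (ancestor_map_exists p) as [ap Hap], (ancestor_map_exists q) as [aq Haq].
  pose proof (ancestor_map_isometry p ap Hap) as Ip.
  pose proof (ancestor_map_isometry q aq Haq) as Iq.
  exists (fun s => if Rle_dec s (l p - m p q) then ap (l p - s) else aq (2 * m p q + s - l p)).
  unfold is_geodesic. rewrite dist_levels. split; [|split].
  - destruct Rle_dec; [|lra]. apply (ancestor_map_at p); auto; [lra|rewrite m_diag; lra|].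
    f_equal; lra.
  - destruct Rle_dec.
    + apply (ancestor_map_at p); auto; lra.
    + apply (ancestor_map_at q); auto; [lra|rewrite m_diag; lra|lra].
  - intros s t Hs Ht.
    destruct (Rle_dec s (l p - m p q)), (Rle_dec t (l p - m p q)).
    + exact (Ip s t ltac:(lra) ltac:(lra)).
    + rewrite (ancestor_maps_dist p q ap aq) by (assumption || lra). rewrite Rabs_left1; lra.
    + rewrite (metric_sym rooted_metric), (ancestor_maps_dist p q ap aq) by (assumption || lra).
      rewrite Rabs_right; lra.
    + pose proof (Iq (l p + l q - 2 * m p q - s) (l p + l q - 2 * m p q - t)) as I; cbv beta in I.
      replace (2 * m p q + s - l p) with (l q - (l p + l q - 2 * m p q - s)) by lra.
      replace (2 * m p q + t - l p) with (l q - (l p + l q - 2 * m p q - t)) by lra.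
      rewrite I, Rabs_minus_sym by lra. f_equal. lra.
Qed.

Theorem rooted_R_tree : R_tree d.
Proof.
  apply zero_hyperbolic_R_tree.
  - exact rooted_metric.
  - exact rooted_four_point.
  - exact rooted_geodesic.
Qed.

End Rooted.

(** * Ancestors in a based R-tree *)

Section BasedRTree.
Variables (T : Type) (d : T -> T -> R).
Hypothesis T_R_tree : R_tree d.
Variable o : T.

Let d_metric : is_metric d := proj1 T_R_tree.
Let d_ge0 := metric_ge0 d_metric.
Let d_sym := metric_sym d_metric.
Let d_refl := metric_refl d_metric.
Let d_triangle := metric_triangle d_metric.

Definition geo x y : R -> T :=
  proj1_sig (constructive_indefinite_description _ (proj2 T_R_tree x y)).

Lemma geo_spec x y : is_geodesic d (geo x y) x y /\
  forall a, is_arc d a x y -> forall z,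
    (exists s, 0 <= s <= 1 /\ a s = z) <-> (exists t, 0 <= t <= d x y /\ geo x y t = z).
Proof. exact (proj2_sig (constructive_indefinite_description _ (proj2 T_R_tree x y))). Qed.

Lemma geo_start x y : geo x y 0 = x.
Proof. apply geo_spec. Qed.

Lemma geo_end x y : geo x y (d x y) = y.
Proof. apply geo_spec. Qed.

Lemma geo_isometry x y s t : 0 <= s <= d x y -> 0 <= t <= d x y ->
  d (geo x y s) (geo x y t) = Rabs (s - t).
Proof. apply geo_spec. Qed.

(* Two geodesic segments meeting only at their junction form an arc, which by
   uniqueness of arcs runs along the geodesic between its ends. *)
Lemma junction_on_geodesic (p1 p2 : R -> T) L1 L2 : 0 <= L1 -> 0 <= L2 -> p1 L1 = p2 0 ->
  isometric_on d p1 L1 -> isometric_on d p2 L2 ->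
  (forall s t, 0 <= s <= L1 -> 0 <= t <= L2 -> p1 s = p2 t -> s = L1 /\ t = 0) ->
  exists tau, 0 <= tau <= d (p1 0) (p2 L2) /\ geo (p1 0) (p2 L2) tau = p1 L1.
Proof.
  intros hL1 hL2 J I1 I2 Cr.
  destruct (Req_dec (L1 + L2) 0) as [hz|hz].
  { exists 0. split; [pose proof (d_ge0 (p1 0) (p2 L2)); lra|].
    rewrite geo_start. f_equal. lra. }
  apply (proj2 (geo_spec _ _) _ (concat_arc d_metric p1 p2 L1 L2 hL1 hL2 J I1 I2 Cr ltac:(lra))).
  exists (L1 / (L1 + L2)).
  replace (L1 / (L1 + L2) * (L1 + L2)) with L1 by (field; exact hz).
  split.
  - split; [apply Rmult_le_pos; [lra|left; apply Rinv_0_lt_compat; lra]|].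
    apply Rmult_le_reg_r with (L1 + L2); [lra|].
    unfold Rdiv. rewrite Rmult_assoc, Rinv_l by exact hz. lra.
  - unfold concat. destruct Rle_dec; [reflexivity|lra].
Qed.

Definition ht x := d o x.
Definition anc y t := geo o y t.
Definition gromov x y := gprod d o x y.

Lemma ht_ge0 x : 0 <= ht x.
Proof. apply d_ge0. Qed.

Lemma anc_root y : anc y 0 = o.
Proof. apply geo_start. Qed.

Lemma anc_top y : anc y (ht y) = y.
Proof. apply geo_end. Qed.

Lemma anc_isometry y t t' : 0 <= t <= ht y -> 0 <= t' <= ht y ->
  d (anc y t) (anc y t') = Rabs (t - t').
Proof. apply geo_isometry. Qed.

Lemma ht_anc y t : 0 <= t <= ht y -> ht (anc y t) = t.
Proof.
  intros h. unfold ht at 1. rewrite <- (anc_root y) at 1.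
  rewrite anc_isometry by (pose proof (ht_ge0 y); lra). rewrite Rabs_left1; lra.
Qed.

Lemma dist_anc y t : 0 <= t <= ht y -> d (anc y t) y = ht y - t.
Proof.
  intros h. rewrite <- (anc_top y) at 2.
  rewrite anc_isometry by (pose proof (ht_ge0 y); lra). rewrite Rabs_left1; lra.
Qed.

Lemma anc_of_between x y : ht x + d x y = ht y -> anc y (ht x) = x.
Proof.
  intros H. unfold ht in *.
  destruct (junction_on_geodesic (geo o x) (geo x y) (d o x) (d x y))
    as [tau [Ht Hg]]; try apply d_ge0; try (intros ? ?; apply geo_isometry).
  - rewrite geo_start, geo_end. reflexivity.
  - intros s t hs hts E.
    pose proof (geo_isometry o x 0 s ltac:(pose proof (d_ge0 o x); lra) hs) as D1.
    pose proof (geo_isometry x y t (d x y) hts ltac:(pose proof (d_ge0 x y); lra)) as D2.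
    rewrite geo_start in D1. rewrite geo_end in D2. rewrite Rabs_left1 in D1, D2 by lra.
    rewrite E in D1. pose proof (d_triangle o (geo x y t) y). lra.
  - rewrite !geo_start, !geo_end in *.
    pose proof (geo_isometry o y 0 tau ltac:(pose proof (d_ge0 o y); lra) Ht) as D.
    rewrite geo_start, Hg, Rabs_left1 in D by lra.
    unfold anc. replace (d o x) with tau by lra. exact Hg.
Qed.

Lemma anc_anc y s t : 0 <= t -> t <= s -> s <= ht y -> anc (anc y s) t = anc y t.
Proof.
  intros h1 h2 h3.
  assert (E : ht (anc y t) = t) by (apply ht_anc; lra).
  rewrite <- E at 1. apply anc_of_between.
  rewrite E, anc_isometry, ht_anc by lra. rewrite Rabs_left1; lra.
Qed.

Lemma gromov_sym x y : gromov x y = gromov y x.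
Proof. apply (gprod_sym d_metric). Qed.

Lemma gromov_ge0 x y : 0 <= gromov x y.
Proof. apply (gprod_ge0 d_metric). Qed.

Lemma gromov_le_ht x y : gromov x y <= ht x.
Proof. apply (gprod_le d_metric). Qed.

Lemma le_gromov_of_anc_eq u v t : 0 <= t <= ht u -> t <= ht v -> anc u t = anc v t ->
  t <= gromov u v.
Proof.
  intros h1 h2 E. unfold gromov, gprod. fold (ht u) (ht v).
  pose proof (d_triangle u (anc u t) v) as D.
  rewrite (d_sym u (anc u t)), dist_anc, E, dist_anc in D by lra. lra.
Qed.

Lemma anc_eq_below u v s t : anc u s = anc v s -> 0 <= t <= s -> s <= ht u -> s <= ht v ->
  anc u t = anc v t.
Proof.
  intros E hts hu hv. rewrite <- (anc_anc u s t), <- (anc_anc v s t), E by lra. reflexivity.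
Qed.

Lemma gromov_of_branch_point u v s : 0 <= s <= Rmin (ht u) (ht v) -> anc u s = anc v s ->
  (forall t, s < t <= Rmin (ht u) (ht v) -> anc u t <> anc v t) ->
  gromov u v = s.
Proof.
  intros hs E Hsplit.
  assert (s <= ht u /\ s <= ht v) as [hu hv] by Rmin_lra.
  destruct (junction_on_geodesic (fun r => anc u (ht u - r)) (fun r => anc v (s + r))
             (ht u - s) (ht v - s)) as [tau [Ht Hg]]; cbv beta in *; try lra.
  - replace (ht u - (ht u - s)) with s by lra. rewrite E. f_equal; lra.
  - intros r r' hr hr'. rewrite anc_isometry by lra. rewrite Rabs_minus_sym. f_equal; lra.
  - intros r r' hr hr'. rewrite anc_isometry by lra. f_equal; lra.
  - intros r t hr hts E'.
    assert (L : ht u - r = s + t).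
    { rewrite <- (ht_anc u (ht u - r)) by lra. rewrite E'. apply ht_anc. lra. }
    destruct (Req_dec t 0) as [z|nz]; [split; lra|].
    exfalso. apply (Hsplit (s + t)); [Rmin_lra|]. rewrite <- L at 1. exact E'.
  - rewrite Rminus_0_r, anc_top in Ht, Hg.
    replace (s + (ht v - s)) with (ht v) in Ht, Hg by lra. rewrite anc_top in Ht, Hg.
    replace (ht u - (ht u - s)) with s in Hg by lra.
    pose proof (geo_isometry u v 0 tau ltac:(pose proof (d_ge0 u v); lra) Ht) as D1.
    pose proof (geo_isometry u v tau (d u v) Ht ltac:(pose proof (d_ge0 u v); lra)) as D2.
    rewrite geo_start, Hg in D1. rewrite geo_end, Hg in D2.
    rewrite Rabs_left1 in D1, D2 by lra.
    rewrite d_sym, dist_anc in D1 by lra. rewrite E, dist_anc in D2 by lra.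
    unfold gromov, gprod. fold (ht u) (ht v). lra.
Qed.

Lemma anc_eq_of_le_gromov u v t : 0 <= t <= gromov u v -> anc u t = anc v t.
Proof.
  intros hts.
  set (mn := Rmin (ht u) (ht v)).
  assert (Hm0 : 0 <= mn) by (pose proof (ht_ge0 u); pose proof (ht_ge0 v); unfold mn; Rmin_lra).
  set (S := fun t => 0 <= t <= mn /\ anc u t = anc v t).
  assert (S0 : S 0) by (split; [lra|rewrite !anc_root; reflexivity]).
  assert (HB : bound S) by (exists mn; intros x [hx _]; lra).
  destruct (completeness S HB (ex_intro _ 0 S0)) as [sg [Hub Hlub]].
  assert (Hs0 : 0 <= sg) by (apply Hub, S0).
  assert (Hsm : sg <= mn) by (apply Hlub; intros x [hx _]; lra).
  assert (mn <= ht u /\ mn <= ht v) as [Hmu Hmv] by (unfold mn; Rmin_lra).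
  assert (Hsg : anc u sg = anc v sg).
  { apply (metric_eq0 d_metric).
    destruct (Rle_lt_or_eq_dec 0 (d (anc u sg) (anc v sg)) (d_ge0 _ _)) as [h|h]; [|auto].
    exfalso. set (D := d (anc u sg) (anc v sg)) in *.
    assert (Hx : exists x, S x /\ sg - D / 4 < x).
    { apply NNPP; intro Hno. assert (sg <= sg - D / 4); [|lra].
      apply Hlub. intros x Hx. destruct (Rle_dec x (sg - D / 4)); auto.
      exfalso; apply Hno; exists x; split; auto; lra. }
    destruct Hx as [x [[hx1 ex] hx]].
    assert (x <= sg) by (apply Hub; split; auto).
    pose proof (d_triangle (anc u sg) (anc u x) (anc v sg)) as Dt.
    rewrite (anc_isometry u sg x), ex, (anc_isometry v x sg) in Dt by lra.
    rewrite Rabs_right in Dt by lra. rewrite Rabs_left1 in Dt by lra.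
    unfold D in *. lra. }
  assert (Hg : gromov u v = sg).
  { apply gromov_of_branch_point; fold mn; [lra|exact Hsg|].
    intros t' Ht' E. assert (t' <= sg) by (apply Hub; split; [lra|exact E]). lra. }
  apply (anc_eq_below u v sg t); auto; lra.
Qed.

(** * The simplicial tree of integer heights *)

Definition vertex := {x : T | exists n : nat, ht x = INR n}.

(* [ht x + d x y = ht y] says that [x] lies on the geodesic [o, y]. *)
Definition is_edge (p : vertex * vertex) : Prop :=
  let (x, y) := p in
  ht (proj1_sig y) = ht (proj1_sig x) + 1 /\
  ht (proj1_sig x) + d (proj1_sig x) (proj1_sig y) = ht (proj1_sig y).

Definition edge := {p : vertex * vertex | is_edge p}.
Definition esrc (e : edge) : vertex := fst (proj1_sig e).
Definition etgt (e : edge) : vertex := snd (proj1_sig e).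

Lemma vertex_eq (a b : vertex) : proj1_sig a = proj1_sig b -> a = b.
Proof. destruct a, b; simpl; intros <-; f_equal; apply proof_irrelevance. Qed.

Lemma edge_eq (e e' : edge) : proj1_sig e = proj1_sig e' -> e = e'.
Proof. destruct e, e'; simpl; intros <-; f_equal; apply proof_irrelevance. Qed.

Lemma edge_between e : ht (proj1_sig (esrc e)) + d (proj1_sig (esrc e)) (proj1_sig (etgt e))
  = ht (proj1_sig (etgt e)).
Proof. destruct e as [[x y] [h1 h2]]; exact h2. Qed.

Lemma edge_length e : d (proj1_sig (esrc e)) (proj1_sig (etgt e)) = 1.
Proof. destruct e as [[x y] [h1 h2]]; unfold esrc, etgt; simpl in *; lra. Qed.

Definition conf (a b : vertex) : nat := nfloor (gromov (proj1_sig a) (proj1_sig b)).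

(* [gromov a a = ht a] is an integer, so [level a] is the height of [a]. *)
Definition level (a : vertex) : nat := conf a a.

Lemma le_conf a b n : INR n <= gromov (proj1_sig a) (proj1_sig b) <-> (n <= conf a b)%nat.
Proof. apply le_nfloor, gromov_ge0. Qed.

Lemma conf_le_gromov a b : INR (conf a b) <= gromov (proj1_sig a) (proj1_sig b).
Proof. apply le_conf; reflexivity. Qed.

Lemma gromov_lt_conf a b : gromov (proj1_sig a) (proj1_sig b) < INR (conf a b) + 1.
Proof. apply nfloor_spec, gromov_ge0. Qed.

Lemma ht_vertex (a : vertex) : ht (proj1_sig a) = INR (level a).
Proof.
  destruct a as [x [n hn]]. unfold level, conf; simpl.
  assert (gromov x x = ht x) by (unfold gromov, gprod; rewrite d_refl; fold (ht x); lra).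
  rewrite H, hn, nfloor_INR; reflexivity.
Qed.

Lemma conf_sym a b : conf a b = conf b a.
Proof. unfold conf; rewrite gromov_sym; reflexivity. Qed.

Lemma conf_le_level a b : (conf a b <= level a)%nat.
Proof.
  apply INR_le. rewrite <- ht_vertex.
  eapply Rle_trans; [apply conf_le_gromov|apply gromov_le_ht].
Qed.

Lemma conf_le_level_r a b : (conf a b <= level b)%nat.
Proof. rewrite conf_sym. apply conf_le_level. Qed.

Lemma INR_le_level (y : vertex) j : (j <= level y)%nat -> 0 <= INR j <= ht (proj1_sig y).
Proof. intros h. split; [apply pos_INR|rewrite ht_vertex; apply le_INR, h]. Qed.

Lemma ht_anc_INR (y : vertex) j : ht (anc (proj1_sig y) (INR (Nat.min j (level y))))
  = INR (Nat.min j (level y)).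
Proof. apply ht_anc, INR_le_level. lia. Qed.

(* Junk value [y] when [j > level y]. *)
Definition vanc (y : vertex) (j : nat) : vertex :=
  exist _ (anc (proj1_sig y) (INR (Nat.min j (level y)))) (ex_intro _ _ (ht_anc_INR y j)).

Lemma vanc_val y j : (j <= level y)%nat -> proj1_sig (vanc y j) = anc (proj1_sig y) (INR j).
Proof. intros h. simpl. do 2 f_equal. lia. Qed.

Lemma level_vanc y j : (j <= level y)%nat -> level (vanc y j) = j.
Proof.
  intros h. apply INR_eq. rewrite <- ht_vertex, vanc_val by exact h.
  apply ht_anc, INR_le_level, h.
Qed.

Lemma vanc_top y : vanc y (level y) = y.
Proof. apply vertex_eq. rewrite vanc_val, <- ht_vertex by lia. apply anc_top. Qed.

Lemma vanc_vanc y j k : (k <= j)%nat -> (j <= level y)%nat -> vanc (vanc y j) k = vanc y k.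
Proof.
  intros h1 h2. apply vertex_eq.
  rewrite !vanc_val by (rewrite ?level_vanc; lia).
  apply anc_anc; [apply pos_INR|apply le_INR, h1|apply INR_le_level, h2].
Qed.

Lemma level_etgt e : level (etgt e) = S (level (esrc e)).
Proof.
  apply INR_eq. rewrite S_INR, <- !ht_vertex.
  destruct e as [[x y] [h1 h2]]; exact h1.
Qed.

Lemma esrc_vanc e : esrc e = vanc (etgt e) (level (esrc e)).
Proof.
  apply vertex_eq. rewrite vanc_val by (rewrite level_etgt; lia). rewrite <- ht_vertex.
  symmetry. apply anc_of_between, edge_between.
Qed.

Lemma edge_inj_tgt e e' : etgt e = etgt e' -> e = e'.
Proof.
  intros h. assert (esrc e = esrc e').
  { rewrite (esrc_vanc e), (esrc_vanc e'), h.
    pose proof (level_etgt e); pose proof (level_etgt e'). rewrite h in *. f_equal. lia. }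
  apply edge_eq. destruct e as [[x y] p], e' as [[x' y'] p'].
  unfold etgt, esrc in *; simpl in *. subst; reflexivity.
Qed.

Lemma gromov_mono_between x y b : ht x + d x y = ht y ->
  gromov x b <= gromov y b <= gromov x b + d x y.
Proof.
  intros h. unfold gromov, gprod. fold (ht x) (ht y) (ht b).
  pose proof (d_triangle y x b); pose proof (d_triangle x y b). rewrite (d_sym y x) in *. lra.
Qed.

Lemma conf_edge e b :
  (conf (esrc e) b <= conf (etgt e) b <= S (conf (esrc e) b))%nat.
Proof.
  pose proof (gromov_mono_between _ _ (proj1_sig b) (edge_between e)) as G.
  rewrite edge_length in G. split.
  - apply le_conf. eapply Rle_trans; [apply conf_le_gromov|apply G].
  - pose proof (conf_le_gromov (etgt e) b). pose proof (gromov_lt_conf (esrc e) b).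
    assert (INR (conf (etgt e) b) < INR (S (S (conf (esrc e) b)))) by (rewrite !S_INR; lra).
    apply INR_lt in H1. lia.
Qed.

Lemma vanc_conf a b : vanc a (conf a b) = vanc b (conf a b).
Proof.
  apply vertex_eq. rewrite !vanc_val by (apply conf_le_level || apply conf_le_level_r).
  apply anc_eq_of_le_gromov. split; [apply pos_INR|apply conf_le_gromov].
Qed.

Lemma conf_of_vanc_eq a b k : (k <= level a)%nat -> (k <= level b)%nat ->
  vanc a k = vanc b k -> (k <= conf a b)%nat.
Proof.
  intros ha hb E. apply le_conf, le_gromov_of_anc_eq;
    [apply INR_le_level, ha|apply INR_le_level, hb|].
  rewrite <- !vanc_val by assumption. rewrite E; reflexivity.
Qed.

Lemma vanc_eq_of_le_conf a b k : (k <= conf a b)%nat -> vanc a k = vanc b k.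
Proof.
  intros h. pose proof (conf_le_level a b); pose proof (conf_le_level_r a b).
  rewrite <- (vanc_vanc a (conf a b) k), <- (vanc_vanc b (conf a b) k), vanc_conf by lia.
  reflexivity.
Qed.

Lemma conf_vanc y j b : (j <= level y)%nat -> conf (vanc y j) b = Nat.min j (conf y b).
Proof.
  intros hj. pose proof (conf_le_level y b); pose proof (conf_le_level_r y b).
  apply Nat.le_antisymm.
  - apply Nat.min_glb.
    + rewrite <- (level_vanc y j) at 2 by exact hj. apply conf_le_level.
    + apply le_conf. eapply Rle_trans; [apply conf_le_gromov|].
      apply gromov_mono_between.
      rewrite vanc_val, ht_anc, dist_anc by (exact hj || apply INR_le_level, hj).
      lra.
  - apply conf_of_vanc_eq; [rewrite level_vanc; lia|lia|].
    rewrite vanc_vanc by lia. apply vanc_eq_of_le_conf. lia.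
Qed.

Lemma conf_ultra a b c : (Nat.min (conf a b) (conf b c) <= conf a c)%nat.
Proof.
  pose proof (conf_le_level a b); pose proof (conf_le_level_r b c).
  apply conf_of_vanc_eq; try lia.
  transitivity (vanc b (Nat.min (conf a b) (conf b c))); apply vanc_eq_of_le_conf; lia.
Qed.

Lemma conf_sep a b : conf a b = level a -> level a = level b -> a = b.
Proof.
  intros h1 h2. rewrite <- (vanc_top a), <- (vanc_top b), <- h2, <- h1.
  apply vanc_eq_of_le_conf. reflexivity.
Qed.

Notation gwalk := (walk esrc etgt).

Lemma walk_app u w v n m : gwalk u w n -> gwalk w v m -> gwalk u v (n + m).
Proof. induction 1; simpl; auto. intros. econstructor; eauto. Qed.

Lemma walk_rev u v n : gwalk u v n -> gwalk v u n.
Proof.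
  induction 1; [constructor|].
  replace (S n) with (n + 1)%nat by lia. eapply walk_app; [eassumption|].
  apply walk_cons with u; [|constructor].
  destruct H as [e [[h1 h2]|[h1 h2]]]; exists e; tauto.
Qed.

(* Along an edge the level changes by one while [conf _ v] changes by at most that much. *)
Lemma walk_length_ge u v n : gwalk u v n -> (level u + level v <= n + 2 * conf u v)%nat.
Proof.
  induction 1.
  - unfold level. lia.
  - destruct H as [e [[<- <-]|[<- <-]]];
      pose proof (level_etgt e); pose proof (conf_edge e v); lia.
Qed.

Lemma walk_to_vanc n : forall (u : vertex) k, level u = (k + n)%nat -> gwalk u (vanc u k) n.
Proof.
  induction n as [|n IH]; intros u k h.
  - replace k with (level u) by lia. rewrite vanc_top. constructor.
  - set (p := vanc u (k + n)).
    assert (hp : level p = (k + n)%nat) by (apply level_vanc; lia).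
    assert (hr : 0 <= INR (k + n) <= ht (proj1_sig u)) by (apply INR_le_level; lia).
    assert (Ep : is_edge (p, u)).
    { unfold is_edge. unfold p. rewrite vanc_val, ht_anc, dist_anc by (exact hr || lia).
      rewrite ht_vertex, h, plus_INR, S_INR, plus_INR. split; lra. }
    apply walk_cons with p.
    + exists (exist _ (p, u) Ep). right. split; reflexivity.
    + replace (vanc u k) with (vanc p k) by (unfold p; apply vanc_vanc; lia).
      apply IH. lia.
Qed.

Lemma walk_via_conf u v : gwalk u v (level u + level v - 2 * conf u v).
Proof.
  pose proof (conf_le_level u v); pose proof (conf_le_level_r u v).
  replace (level u + level v - 2 * conf u v)%nat
    with ((level u - conf u v) + (level v - conf u v))%nat by lia.
  apply (walk_app _ (vanc u (conf u v))); [apply walk_to_vanc; lia|].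
  rewrite vanc_conf. apply walk_rev, walk_to_vanc. lia.
Qed.

Lemma gdist_conf u v : gdist esrc etgt u v = (level u + level v - 2 * conf u v)%nat.
Proof.
  unfold gdist.
  set (P := fun n => gwalk u v n /\ forall m, gwalk u v m -> (n <= m)%nat).
  assert (ex : exists n, P n).
  { eexists. split; [apply walk_via_conf|]. intros m hm. apply walk_length_ge in hm. lia. }
  destruct (epsilon_spec (inhabits 0%nat) P ex) as [h1 h2].
  apply Nat.le_antisymm.
  - apply h2, walk_via_conf.
  - apply walk_length_ge in h1. lia.
Qed.

Lemma INR_gdist u v :
  INR (gdist esrc etgt u v) = INR (level u) + INR (level v) - 2 * INR (conf u v).
Proof.
  rewrite gdist_conf. pose proof (conf_le_level u v); pose proof (conf_le_level_r u v).
  rewrite minus_INR by lia. rewrite plus_INR, mult_INR. simpl (INR 2). lra.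
Qed.

(** * The realization of the graph *)

Notation point := (@rpoint vertex edge).

Definition top (p : point) : vertex := match p with RV v => v | RE e _ => etgt e end.

Definition height (p : point) : R :=
  match p with RV v => INR (level v) | RE e t => INR (level (esrc e)) + proj1_sig t end.

Definition pconf (p q : point) : R :=
  Rmin (height p) (Rmin (height q) (INR (conf (top p) (top q)))).

Lemma height_bounds p : INR (level (top p)) - 1 < height p <= INR (level (top p)).
Proof. destruct p as [v|e [t ht]]; simpl; [lra|]. rewrite level_etgt, S_INR. lra. Qed.

Lemma height_ge0 p : 0 <= height p.
Proof.
  destruct p as [v|e [t ht]]; simpl; [apply pos_INR|].
  pose proof (pos_INR (level (esrc e))); lra.
Qed.

Lemma conf_esrc e b : conf (esrc e) b = Nat.min (level (esrc e)) (conf (etgt e) b).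
Proof. rewrite (esrc_vanc e) at 1. apply conf_vanc. rewrite level_etgt. lia. Qed.

Lemma conf_etgt_cases e b :
  (conf (etgt e) b <= level (esrc e))%nat \/ conf (etgt e) b = S (level (esrc e)).
Proof. pose proof (conf_le_level (etgt e) b). rewrite level_etgt in H. lia. Qed.

Ltac unfold_pdist :=
  unfold pdist, via, ends, minl;
  cbn [flat_map map fold_right fst snd app height top proj1_sig];
  rewrite ?INR_gdist.

Lemma pdist_vertex_vertex u v :
  pdist esrc etgt (RV u) (RV v) = height (RV u) + height (RV v) - 2 * pconf (RV u) (RV v).
Proof.
  unfold pconf. unfold_pdist.
  pose proof (le_INR _ _ (conf_le_level u v)); pose proof (le_INR _ _ (conf_le_level_r u v)).
  Rmin_lra.
Qed.

Lemma pdist_vertex_edge u e t :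
  pdist esrc etgt (RV u) (RE e t) = height (RV u) + height (RE e t) - 2 * pconf (RV u) (RE e t).
Proof.
  destruct t as [t ht]. unfold pconf. unfold_pdist.
  rewrite (conf_sym u (esrc e)), conf_esrc, INR_min, (conf_sym (etgt e) u), level_etgt, S_INR.
  pose proof (le_INR _ _ (conf_le_level u (etgt e))).
  destruct (conf_etgt_cases e u) as [C|C]; rewrite conf_sym in C;
    [apply le_INR in C|rewrite C, S_INR in *]; Rmin_lra.
Qed.

Lemma pdist_edge_vertex e t v :
  pdist esrc etgt (RE e t) (RV v) = height (RE e t) + height (RV v) - 2 * pconf (RE e t) (RV v).
Proof.
  destruct t as [t ht]. unfold pconf. unfold_pdist.
  rewrite conf_esrc, INR_min, level_etgt, S_INR.
  pose proof (le_INR _ _ (conf_le_level_r (etgt e) v)).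
  destruct (conf_etgt_cases e v) as [C|C]; [apply le_INR in C|rewrite C, S_INR in *]; Rmin_lra.
Qed.

Lemma pdist_same_edge e t t' :
  pdist esrc etgt (RE e t) (RE e t')
  = height (RE e t) + height (RE e t') - 2 * pconf (RE e t) (RE e t').
Proof.
  destruct t as [t ht], t' as [t' ht']. unfold pconf, pdist.
  destruct (excluded_middle_informative (e = e)) as [_|]; [|contradiction].
  cbn [height top proj1_sig]. change (conf (etgt e) (etgt e)) with (level (etgt e)).
  rewrite level_etgt, S_INR. unfold Rabs; destruct Rcase_abs; Rmin_lra.
Qed.

(* Distinct edges have distinct upper ends, so [k] cannot reach both levels. *)
Lemma pdist_distinct_edges e t e' t' : e <> e' ->
  pdist esrc etgt (RE e t) (RE e' t')
  = height (RE e t) + height (RE e' t') - 2 * pconf (RE e t) (RE e' t').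
Proof.
  intros hne. destruct t as [t ht], t' as [t' ht']. unfold pconf, pdist.
  destruct (excluded_middle_informative (e = e')) as [|_]; [contradiction|].
  unfold_pdist.
  rewrite (conf_esrc e (esrc e')), (conf_sym (etgt e) (esrc e')), (conf_esrc e' (etgt e)),
    (conf_esrc e (etgt e')), (conf_sym (etgt e') (etgt e)), !level_etgt.
  set (k := conf (etgt e) (etgt e')).
  set (a := level (esrc e)). set (b := level (esrc e')).
  assert (hk1 : (k <= S a)%nat) by (unfold a; rewrite <- level_etgt; apply conf_le_level).
  assert (hk2 : (k <= S b)%nat) by (unfold b; rewrite <- level_etgt; apply conf_le_level_r).
  assert (~ (k = S a /\ k = S b)).
  { intros [c1 c2]. apply hne, edge_inj_tgt, conf_sep; unfold a, b in *; rewrite ?level_etgt; lia. }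
  assert (C : ((k <= a)%nat /\ (k <= b)%nat) \/ (k = S a /\ (k <= b)%nat) \/
              (k = S b /\ (k <= a)%nat)) by lia.
  rewrite !S_INR.
  destruct C as [[c1 c2]|[[c1 c2]|[c1 c2]]].
  - rewrite (Nat.min_r b k), (Nat.min_r a k) by assumption.
    apply le_INR in c1, c2. Rmin_lra.
  - rewrite (Nat.min_r b k), (Nat.min_l a k) by lia.
    rewrite c1 in *. apply le_INR in c2. rewrite !S_INR in *. Rmin_lra.
  - rewrite (Nat.min_l b k), (Nat.min_r a k), (Nat.min_r a b) by lia.
    rewrite c1 in *. apply le_INR in c2. rewrite !S_INR in *. Rmin_lra.
Qed.

Lemma pdist_pconf p q : pdist esrc etgt p q = height p + height q - 2 * pconf p q.
Proof.
  destruct p as [u|e t], q as [v|e' t'].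
  - apply pdist_vertex_vertex.
  - apply pdist_vertex_edge.
  - apply pdist_edge_vertex.
  - destruct (classic (e = e')) as [<-|hne].
    + apply pdist_same_edge.
    + apply pdist_distinct_edges, hne.
Qed.

Lemma pconf_sym p q : pconf p q = pconf q p.
Proof. unfold pconf. rewrite conf_sym. Rmin_lra. Qed.

Lemma pconf_le p q : pconf p q <= height p.
Proof. unfold pconf. Rmin_lra. Qed.

Lemma pconf_le_conf p q : pconf p q <= INR (conf (top p) (top q)).
Proof. unfold pconf. Rmin_lra. Qed.

Lemma pconf_diag p : pconf p p = height p.
Proof.
  unfold pconf. change (conf (top p) (top p)) with (level (top p)).
  pose proof (height_bounds p). Rmin_lra.
Qed.

Lemma pconf_ge0 p q : 0 <= pconf p q.
Proof.
  unfold pconf. pose proof (height_ge0 p); pose proof (height_ge0 q).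
  pose proof (pos_INR (conf (top p) (top q))). Rmin_lra.
Qed.

Lemma pconf_ultra p q r : Rmin (pconf p q) (pconf q r) <= pconf p r.
Proof.
  unfold pconf. pose proof (le_INR _ _ (conf_ultra (top p) (top q) (top r))) as h.
  rewrite INR_min in h. Rmin_lra.
Qed.

Lemma pconf_sep p q : pconf p q = height p -> height p = height q -> p = q.
Proof.
  intros h1 h2.
  assert (hK : height p <= INR (conf (top p) (top q))) by (rewrite <- h1; apply pconf_le_conf).
  pose proof (height_bounds p); pose proof (height_bounds q).
  assert (k1 : (level (top p) <= conf (top p) (top q))%nat).
  { apply Nat.lt_succ_r, INR_lt. rewrite S_INR. lra. }
  assert (k2 : (level (top q) <= conf (top p) (top q))%nat).
  { apply Nat.lt_succ_r, INR_lt. rewrite S_INR. lra. }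
  pose proof (conf_le_level (top p) (top q)); pose proof (conf_le_level_r (top p) (top q)).
  assert (hy : top p = top q) by (apply conf_sep; lia).
  destruct p as [u|e [t ht]], q as [v|e' [t' ht']]; cbn [top height proj1_sig] in *.
  - congruence.
  - subst u. rewrite level_etgt, S_INR in h2. exfalso; lra.
  - subst v. rewrite level_etgt, S_INR in h2. exfalso; lra.
  - apply edge_inj_tgt in hy. subst e'. assert (t = t') by lra. subst t'.
    do 2 f_equal. apply proof_irrelevance.
Qed.

Lemma vanc_edge y n : (S n <= level y)%nat -> is_edge (vanc y n, vanc y (S n)).
Proof.
  intros h. unfold is_edge.
  rewrite !vanc_val, !ht_anc, anc_isometry by first [lia | apply INR_le_level; lia].
  rewrite S_INR, Rabs_left1; lra.
Qed.

Lemma pancestor_exists p r : 0 <= r <= height p ->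
  exists a, height a = r /\ forall q, pconf a q = Rmin r (pconf p q).
Proof.
  intros hr. set (y := top p). pose proof (height_bounds p) as [b1 b2]. fold y in b1, b2.
  set (n := nfloor r). pose proof (nfloor_spec r (proj1 hr)) as [f1 f2]. fold n in f1, f2.
  assert (hn : (n <= level y)%nat) by (apply INR_le; lra).
  destruct (Req_dec (INR n) r) as [E1|E1].
  - exists (RV (vanc y n)). cbn [height]. rewrite level_vanc by exact hn. split; [exact E1|].
    intros q. unfold pconf. cbn [top height]. rewrite level_vanc, conf_vanc, INR_min by exact hn.
    fold y. Rmin_lra.
  - assert (hn2 : (S n <= level y)%nat) by (apply INR_lt; lra).
    assert (hs : 0 < r - INR n < 1) by lra.
    exists (RE (exist _ _ (vanc_edge y n hn2)) (exist _ (r - INR n) hs)).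
    unfold pconf. cbn [height top]. unfold esrc, etgt. cbn [proj1_sig fst snd].
    rewrite level_vanc by lia. split; [lra|].
    intros q. rewrite conf_vanc, INR_min, S_INR by exact hn2. fold y. Rmin_lra.
Qed.

Lemma realization_R_tree : R_tree (pdist esrc etgt).
Proof.
  apply (rooted_R_tree _ _ height pconf).
  - exact pdist_pconf.
  - exact pconf_sym.
  - exact pconf_le.
  - exact pconf_diag.
  - exact pconf_ge0.
  - exact pconf_ultra.
  - exact pconf_sep.
  - exact pancestor_exists.
Qed.

Lemma graph_simplicial_tree : simplicial_tree esrc etgt.
Proof.
  split; [|split; [|split]].
  - intros e h. pose proof (level_etgt e). rewrite h in *. lia.
  - intros e e' [[h1 h2]|[h1 h2]].
    + apply edge_inj_tgt, h2.
    + pose proof (level_etgt e); pose proof (level_etgt e'). rewrite h1, h2 in *. lia.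
  - intros u v. eexists. apply walk_via_conf.
  - apply realization_R_tree.
Qed.

(** * The quasi-isometry *)

Definition realize (p : point) : T := anc (proj1_sig (top p)) (height p).

Lemma height_le_ht_top p : 0 <= height p <= ht (proj1_sig (top p)).
Proof.
  split; [apply height_ge0|]. rewrite ht_vertex. apply height_bounds.
Qed.

Lemma realize_vertex v : realize (RV v) = proj1_sig v.
Proof. unfold realize. cbn [top height]. rewrite <- ht_vertex. apply anc_top. Qed.

Lemma ht_realize p : ht (realize p) = height p.
Proof. apply ht_anc, height_le_ht_top. Qed.

Lemma realize_between p :
  ht (realize p) + d (realize p) (proj1_sig (top p)) = ht (proj1_sig (top p)).
Proof.
  rewrite ht_realize. unfold realize. rewrite dist_anc by apply height_le_ht_top. lra.
Qed.

(* This is where the constant [2] comes from. *)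
Lemma pconf_gromov_realize p q :
  pconf p q <= gromov (realize p) (realize q) < pconf p q + 1.
Proof.
  pose proof (height_le_ht_top p) as rp; pose proof (height_le_ht_top q) as rq.
  pose proof (pconf_le p q) as m1. pose proof (pconf_le q p) as m2. rewrite pconf_sym in m2.
  pose proof (pconf_ge0 p q) as m0. pose proof (pconf_le_conf p q) as m3.
  split.
  - apply le_gromov_of_anc_eq; rewrite ?ht_realize; [lra|lra|].
    unfold realize. rewrite !anc_anc by lra.
    apply anc_eq_of_le_gromov. split; [exact m0|].
    eapply Rle_trans; [exact m3|apply conf_le_gromov].
  - assert (g1 : gromov (realize p) (realize q) <= height p)
      by (rewrite <- ht_realize; apply gromov_le_ht).
    assert (g2 : gromov (realize p) (realize q) <= height q)
      by (rewrite <- (ht_realize q), gromov_sym; apply gromov_le_ht).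
    assert (g3 : gromov (realize p) (realize q)
                 <= gromov (proj1_sig (top p)) (proj1_sig (top q))).
    { pose proof (gromov_mono_between _ _ (realize q) (realize_between p)).
      pose proof (gromov_mono_between _ _ (proj1_sig (top p)) (realize_between q)).
      rewrite (gromov_sym (realize q)), (gromov_sym (proj1_sig (top q))) in *. lra. }
    pose proof (gromov_lt_conf (top p) (top q)).
    unfold pconf in *. Rmin_lra.
Qed.

Lemma realize_quasi_isometry : quasi_isometry_1C (pdist esrc etgt) d realize 2.
Proof.
  split.
  - intros p q. rewrite pdist_pconf. pose proof (pconf_gromov_realize p q).
    assert (d (realize p) (realize q)
            = height p + height q - 2 * gromov (realize p) (realize q))
      by (unfold gromov, gprod; fold (ht (realize p)) (ht (realize q)); rewrite !ht_realize; lra).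
    lra.
  - intros z. set (n := nfloor (ht z)).
    pose proof (nfloor_spec (ht z) (ht_ge0 z)) as [f1 f2]. fold n in f1, f2.
    assert (hl : ht (anc z (INR n)) = INR n) by (apply ht_anc; split; [apply pos_INR|lra]).
    exists (RV (exist _ (anc z (INR n)) (ex_intro _ n hl))).
    rewrite realize_vertex. cbn [proj1_sig].
    rewrite d_sym, dist_anc by (split; [apply pos_INR|lra]). lra.
Qed.

End BasedRTree.

Lemma empty_graph_simplicial_tree :
  simplicial_tree (V := Empty_set) (E := Empty_set) (fun e => e) (fun e => e).
Proof.
  assert (Hp : forall p : @rpoint Empty_set Empty_set, False) by (intros [[]|[] _]).
  split; [intros []|split; [intros []|split; [intros []|]]].
  split; [split; [|split; [|split]]|]; intros p; destruct (Hp p).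
Qed.

Theorem proposition4p5 :
  forall (T : Type) (d : T -> T -> R), R_tree d ->
  exists (V E : Type) (src tgt : E -> V),
    simplicial_tree src tgt /\
    exists f : rpoint (V:=V) (E:=E) -> T,
      quasi_isometry_1C (pdist src tgt) d f 2.
Proof.
  intros T d HT. destruct (classic (inhabited T)) as [[o]|hempty].
  - exists (vertex T d o), (edge T d o), (esrc T d o), (etgt T d o).
    split; [exact (graph_simplicial_tree T d HT o)|].
    exists (realize T d HT o). apply realize_quasi_isometry.
  - exists Empty_set, Empty_set, (fun e => e), (fun e => e).
    split; [exact empty_graph_simplicial_tree|].
    exists (fun p : @rpoint Empty_set Empty_set =>
      match p with RV v => match v return T with end | RE e _ => match e return T with end end).
    split; [intros [[]|[] _]|].
    intros y. destruct (hempty (inhabits y)).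
Qed.
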